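(* Let $\mathbb{X}$ be a real Banach space such that $(x,x)$ is a CPP for every $x\in S_{\mathbb{X}}$. Then $\mathbb{X}$ is strictly convex.
   Context: $\mathbb{X}$ has dimension greater than $1$. $B(x,r)=\{u:\|u-x\|<r\}$. $x\perp_B y$ means $\|x+\lambda y\|\ge\|x\|$ for all real $\lambda$; $x^\perp=\{y:x\perp_By\}$. For $x,y\in S_{\mathbb{X}}$, $(x,y)$ is a CPP if there exist $r>0,\mu>0$ such that for all $z\in x^\perp\cap S_{\mathbb{X}}$, all $w\in y^\perp\cap S_{\mathbb{X}}$ and all $a,b\in\mathbb{R}$, $ax+bz\in B(x,r)\cap S_{\mathbb{X}}$ implies $\|ay+b\mu w\|\le1$. *)

From HB Require Import structures.
From mathcomp Require Import all_boot all_order all_algebra.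
From mathcomp Require Import all_classical all_reals all_analysis.
Set Implicit Arguments. Unset Strict Implicit. Unset Printing Implicit Defensive.
Import Order.TTheory GRing.Theory Num.Theory.
Import numFieldNormedType.Exports.
Local Open Scope ring_scope.
Local Open Scope classical_set_scope.

Definition oball {R : realType} {V : normedModType R} (x : V) (r : R) : set V :=
  [set u | `|u - x| < r].

Definition usphere {R : realType} {V : normedModType R} : set V :=
  [set u | `|u| = 1].

Definition bj_orth {R : realType} {V : normedModType R} (x y : V) : Prop :=
  forall l : R, `|x| <= `|x + l *: y|.

Definition bj_perp {R : realType} {V : normedModType R} (x : V) : set V :=
  [set y | bj_orth x y].

Definition CPP {R : realType} {V : normedModType R} (x y : V) : Prop :=
  exists r : R, exists mu : R, 0 < r /\ 0 < mu /\
    forall z, z \in bj_perp x `&` usphere ->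
    forall w, w \in bj_perp y `&` usphere ->
    forall a b : R, a *: x + b *: z \in oball x r `&` usphere ->
      `|a *: y + b *: (mu *: w)| <= 1.

Definition dim_gt1 {R : realType} (V : normedModType R) : Prop :=
  exists x y : V, forall a b : R, a *: x + b *: y = 0 -> a = 0 /\ b = 0.

Definition strictly_convex {R : realType} (V : normedModType R) : Prop :=
  forall x y : V, `|x| = 1 -> `|y| = 1 -> x <> y ->
    forall t : R, 0 < t -> t < 1 -> `|t *: x + (1 - t) *: y| < 1.

(** If the unit sphere contains a segment through [p] in the direction of a
    unit vector [z], then [s |-> `|p + s z|] is a convex function that is
    [<= 1] on both sides of [0]; hence it is [>= 1] everywhere, i.e. [p] is
    Birkhoff-James orthogonal to [z].  Let [e] be the largest [s >= 0] with
    [`|p + s z| <= 1] and [u := p + e z].  Then [u] is a unit vector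
    orthogonal to [z] and [-z], and [u - c z] lies on the sphere for all small
    [c > 0]; the CPP property of [(u, u)] applied with [b = c] and [w = z] puts
    [u + c mu z] in the unit ball, contradicting the maximality of [e]. *)
From HB Require Import structures.
From mathcomp Require Import all_boot all_order all_algebra.
From mathcomp Require Import all_classical all_reals all_analysis.
From mathcomp Require Import ring lra.
Set Implicit Arguments. Unset Strict Implicit. Unset Printing Implicit Defensive.
Import Order.TTheory GRing.Theory Num.Theory.
Import numFieldNormedType.Exports.
Local Open Scope ring_scope.

Section NormOnLines.
Variables (R : realType) (V : normedModType R).
Implicit Types (p u z : V) (s : R).

Lemma norm_line_convex p z A C B : A <= C -> C <= B ->
  (B - A) * `|p + C *: z| <= (B - C) * `|p + A *: z| + (C - A) * `|p + B *: z|.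
Proof.
move=> AC CB.
have -> : (B - A) * `|p + C *: z| = `|(B - A) *: (p + C *: z)|.
  by rewrite normrZ ger0_norm // subr_ge0 (le_trans AC).
have -> : (B - A) *: (p + C *: z) = (B - C) *: (p + A *: z) + (C - A) *: (p + B *: z).
  rewrite !scalerDr !scalerA addrACA -!scalerDl.
  by congr (_ *: _ + _ *: _); ring.
apply: le_trans (ler_normD _ _) _.
by rewrite !normrZ !ger0_norm ?subr_ge0.
Qed.

Lemma norm_line_le p z A C B k : A < B -> A <= C -> C <= B ->
  `|p + A *: z| <= k -> `|p + B *: z| <= k -> `|p + C *: z| <= k.
Proof.
move=> AB AC CB hA hB; have := norm_line_convex p z AC CB.
have BA : 0 < B - A by rewrite subr_gt0.
nra.
Qed.

Lemma norm_line_lipschitz p z s t :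
  `|p + s *: z| <= `|p + t *: z| + `|s - t| * `|z|.
Proof.
have -> : p + s *: z = (p + t *: z) + (s - t) *: z.
  by rewrite -addrA -scalerDl addrCA subrr addr0.
by apply: le_trans (ler_normD _ _) _; rewrite normrZ.
Qed.

Lemma le_norm_line p z be s : 0 < be -> 0 <= s ->
  `|p - be *: z| <= `|p| -> `|p| <= `|p + s *: z|.
Proof.
move=> be0 s0 hbe; have Nbe : - be <= 0 by rewrite oppr_le0 ltW.
have := norm_line_convex p z Nbe s0.
by rewrite scale0r addr0 scaleNr; nra.
Qed.

Lemma bj_orthN u z : bj_orth u z -> bj_orth u (- z).
Proof. by move=> uz l; rewrite scalerN -scaleNr. Qed.

Lemma bj_orth_shift u z e :
  bj_orth u z -> `|u + e *: z| = `|u| -> bj_orth (u + e *: z) z.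
Proof. by move=> uz ue l; rewrite ue -addrA -scalerDl. Qed.

Lemma bj_orth_line p z al be : 0 < al -> 0 < be ->
  `|p + al *: z| <= `|p| -> `|p - be *: z| <= `|p| -> bj_orth p z.
Proof.
move=> al0 be0 hal hbe l; have [l0 | l0] := lerP 0 l; first exact: le_norm_line hbe.
have -> : l *: z = (- l) *: (- z) by rewrite scaleNr scalerN opprK.
apply: (le_norm_line al0); first by rewrite oppr_ge0 ltW.
by rewrite scalerN opprK.
Qed.

Lemma CPP_extend u z d : CPP u u -> `|u| = 1 -> `|z| = 1 -> bj_orth u z ->
  0 < d -> `|u - d *: z| <= 1 -> exists2 eps, 0 < eps & `|u + eps *: z| <= 1.
Proof.
move=> [r [mu [r0 [mu0 Huu]]]] nu nz uz d0 hd.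
pose c := Num.min (r / 2) d.
have c0 : 0 < c by rewrite lt_min d0 divr_gt0.
have cr : c < r by rewrite gt_min ltr_pdivrMr // ltr_pMr // ltr1n.
have cd : c <= d by rewrite ge_min lexx orbT.
have perp_z : z \in (bj_perp u `&` usphere)%classic by rewrite in_setE.
have perp_Nz : - z \in (bj_perp u `&` usphere)%classic.
  by rewrite in_setE; split; [exact: bj_orthN | rewrite /usphere /= normrN].
have ucz : `|u - c *: z| = 1.
  apply: le_anti; rewrite -[in X in _ && X]nu -scaleNr uz andbT.
  apply: (@norm_line_le _ _ (- d) _ 0); rewrite ?scaleNr ?scale0r ?addr0 ?nu //.
  - by rewrite oppr_lt0.
  - by rewrite lerN2.
  - by rewrite oppr_le0 ltW.
have uc : 1 *: u + c *: - z \in (oball u r `&` usphere)%classic.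
  rewrite in_setE scale1r scalerN; split => //.
  by rewrite /oball /= addrAC subrr add0r normrN normrZ nz mulr1 gtr0_norm.
exists (c * mu); first exact: mulr_gt0.
by have := Huu _ perp_Nz _ perp_z _ _ uc; rewrite scale1r scalerA.
Qed.

Lemma CPP_no_unit_segment p z al :
  (forall u : V, `|u| = 1 -> CPP u u) ->
  `|p| = 1 -> `|z| = 1 -> bj_orth p z -> 0 < al -> `|p + al *: z| <= 1 -> False.
Proof.
move=> hcpp np nz pz al0 hal.
pose T := [set s | 0 <= s /\ `|p + s *: z| <= 1]%classic.
have supT : has_sup T.
  split; first by exists al; split => //; exact: ltW.
  exists 2 => s [s0 hs]; have := ler_normB (p + s *: z) p.
  by rewrite addrC addKr normrZ nz mulr1 ger0_norm // np; lra.
pose e := sup T.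
have ale : al <= e by apply: sup_upper_bound => //; split => //; exact: ltW.
have he : `|p + e *: z| <= 1.
  rewrite leNgt; apply/negP => hlt.
  have gap : 0 < `|p + e *: z| - 1 by rewrite subr_gt0.
  have [t [t0 ht] et] := sup_adherent gap supT; rewrite -/e in et.
  have te : t <= e by apply: sup_upper_bound.
  by have := norm_line_lipschitz p z e t; rewrite nz mulr1 ger0_norm ?subr_ge0 //; lra.
have nu : `|p + e *: z| = 1 by apply: le_anti; rewrite he -np pz.
have [eps eps0 heps] : exists2 eps, 0 < eps & `|p + e *: z + eps *: z| <= 1.
  apply: (CPP_extend (d := e) (hcpp _ nu)) => //.
  - by apply: bj_orth_shift; rewrite ?nu.
  - exact: lt_le_trans ale.
  - by rewrite addrK np.
have : T (e + eps) by split; [lra | rewrite scalerDl addrA].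
by move/(sup_upper_bound supT); rewrite -/e; lra.
Qed.

End NormOnLines.

Theorem mainTheorem19 (R : realType) (X : completeNormedModType R) :
  dim_gt1 X ->
  (forall x : X, `|x| = 1 -> CPP x x) ->
  strictly_convex X.
Proof.
move=> _ hcpp x y nx ny xy t t0 t1; rewrite ltNge; apply/negP => hp.
pose p := t *: x + (1 - t) *: y.
have dxy : 0 < `|x - y| by rewrite normr_gt0 subr_eq0; apply/eqP.
pose z := `|x - y|^-1 *: (x - y).
have nz : `|z| = 1 by rewrite normfZV // -normr_gt0.
have px : p + ((1 - t) * `|x - y|) *: z = x.
  rewrite scalerA mulfK ?gt_eqF // /p.
  by rewrite scalerBr addrA addrAC addrK -scalerDl addrCA subrr addr0 scale1r.
have py : p - (t * `|x - y|) *: z = y.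
  rewrite scalerA mulfK ?gt_eqF // /p.
  by rewrite scalerBr opprB addrA addrC addrA addKr -scalerDl subrK scale1r.
have al0 : 0 < (1 - t) * `|x - y| by rewrite mulr_gt0 // subr_gt0.
have pz : bj_orth p z.
  by apply: (bj_orth_line al0 (mulr_gt0 t0 dxy)); rewrite ?px ?py ?nx ?ny.
have np : `|p| = 1.
  by apply: le_anti; rewrite hp andbT -nx -[X in _ <= `|X|]px; apply: pz.
by apply: (CPP_no_unit_segment hcpp np nz pz al0); rewrite px nx.
Qed.
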